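(* Fix $p\in[0,\infty]$, a dynamic monetary risk measure $(R_t)_{t=0}^{T-1}$, a dynamic monetary utility function $(U_t)_{t=0}^{T-1}$ and $\eta_t\in L^0(\mathcal{F}_t)$, $\eta_t>0$; let $W_t$ and the cost-of-capital margins $V_t$ be as defined in the context. Let $X,\widetilde X$ be $\mathbb{F}$-adapted cash flows with $X_s,\widetilde X_s\in L^p(\mathcal{F}_s)$ for every $s$. (i) Let $t<T$, $a\in L^p_+(\mathcal{F}_t)$, let $b=(b_1,\dots,b_T)$ be a vector with components in $L^p(\mathcal{F}_t)$, and suppose $X_u\le\widetilde X_u$ for each $u$. Then $$V_t(aX)=aV_t(X),\qquad V_t(X+b)=V_t(X)+\sum_{u=t+1}^T b_u,\qquad V_t(X)\le V_t(\widetilde X).$$ (ii) (Time consistency) For every pair of times $s\le t$, if $(X_u)_{u=1}^t=(\widetilde X_u)_{u=1}^t$ and $V_t(X)\le V_t(\widetilde X)$, then $V_s(X)\le V_s(\widetilde X)$.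
   Context: Let $T\ge 1$ and $(\Omega,\mathcal{F},\mathbb{F},\mathbb{P})$ a filtered probability space with $\mathbb{F}=(\mathcal{F}_t)_{t=0}^T$, $\{\emptyset,\Omega\}=\mathcal{F}_0\subseteq\dots\subseteq\mathcal{F}_T=\mathcal{F}$. $L^0(\mathcal{F}_t)$: real $\mathcal{F}_t$-measurable random variables; $L^p(\mathcal{F}_t)$ for $p\in(0,\infty)$: those with $\mathbb{E}|Y|^p<\infty$; $L^\infty(\mathcal{F}_t)$: essentially bounded ones; $L^p_+$: nonnegative elements. (In)equalities are a.s.; $x_+=\max(x,0)$. A dynamic monetary risk measure: maps $R_t:L^p(\mathcal{F}_{t+1})\to L^p(\mathcal{F}_t)$, $t=0,\dots,T-1$, with $R_t(Y+\lambda)=R_t(Y)-\lambda$ ($\lambda\in L^p(\mathcal{F}_t)$), $Y\le\widetilde Y\Rightarrow R_t(Y)\ge R_t(\widetilde Y)$, $R_t(cY)=cR_t(Y)$ ($c\in L^p_+(\mathcal{F}_t)$). A dynamic monetary utility function: maps $U_t:L^p(\mathcal{F}_{t+1})\to L^p(\mathcal{F}_t)$ with $U_t(Y+\lambda)=U_t(Y)+\lambda$, $Y\le\widetilde Y\Rightarrow U_t(Y)\le U_t(\widetilde Y)$, $U_t(cY)=cU_t(Y)$. Define $W_t(Y):=R_t(-Y)-\frac{1}{1+\eta_t}U_t((R_t(-Y)-Y)_+)$ for $Y\in L^p(\mathcal{F}_{t+1})$, and for an adapted cash flow $X=(X_t)_{t=1}^T$ with $X_t\in L^p(\mathcal{F}_t)$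 the cost-of-capital margins $V_t(X):=W_t\circ\dots\circ W_{T-1}(X_{t+1}+\dots+X_T)$ for $t=0,\dots,T-1$ and $V_T(X):=0$. Here $aX=(aX_u)_u$ and $X+b=(X_u+b_u)_u$. *)

From HB Require Import structures.
From mathcomp Require Import all_boot all_order all_algebra.
From mathcomp Require Import all_classical all_reals all_analysis.
Set Implicit Arguments. Unset Strict Implicit. Unset Printing Implicit Defensive.
Import Order.TTheory GRing.Theory Num.Theory.
Local Open Scope classical_set_scope.
Local Open Scope ring_scope.

Section CoC.
Context {R : realType} {d : measure_display} {Omega : measurableType d}.
Variable (P : probability Omega R).

Definition filtration (T : nat) (F : nat -> set (set Omega)) : Prop :=
  [/\ (forall t, (t <= T)%N -> sigma_algebra setT (F t)),
      (forall s t, (s <= t)%N -> (t <= T)%N -> F s `<=` F t),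
      F 0%N = [set A | A = set0 \/ A = setT] &
      F T = @measurable d Omega].

Definition meas_wrt (G : set (set Omega)) (f : Omega -> R) : Prop :=
  forall B : set R, measurable B -> G (f @^-1` B).

Definition as_eq (f g : Omega -> R) : Prop := {ae P, forall x, f x = g x}.
Definition as_le (f g : Omega -> R) : Prop := {ae P, forall x, f x <= g x}.

(* L^p(G) for p in [0, +oo]: p = 0 gives L^0, p = +oo gives L^oo. *)
Definition Lp (p : \bar R) (G : set (set Omega)) (f : Omega -> R) : Prop :=
  meas_wrt G f /\
  match p with
  | +oo%E => exists M : R, {ae P, forall x, `|f x| <= M}
  | r%:E => r = 0 \/ (\int[P]_x ((`|f x| `^ r)%:E) < +oo)%E
  | -oo%E => False
  end.

Definition Lp_plus (p : \bar R) (G : set (set Omega)) (f : Omega -> R) : Prop :=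
  Lp p G f /\ as_le (fun=> 0) f.

(* Dynamic monetary risk measure R_t : L^p(F_{t+1}) -> L^p(F_t), t = 0..T-1.
   Positive homogeneity is required whenever c * Y is again in L^p(F_{t+1}). *)
Definition dyn_risk_measure (p : \bar R) (T : nat) (F : nat -> set (set Omega))
    (Rm : nat -> (Omega -> R) -> (Omega -> R)) : Prop :=
  forall t, (t < T)%N ->
  [/\ (forall Y, Lp p (F t.+1) Y -> Lp p (F t) (Rm t Y)),
      (forall Y lam, Lp p (F t.+1) Y -> Lp p (F t) lam ->
         as_eq (Rm t (fun x => Y x + lam x)) (fun x => Rm t Y x - lam x)),
      (forall Y Y', Lp p (F t.+1) Y -> Lp p (F t.+1) Y' -> as_le Y Y' ->
         as_le (Rm t Y') (Rm t Y)) &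
      (forall Y c, Lp p (F t.+1) Y -> Lp_plus p (F t) c ->
         Lp p (F t.+1) (fun x => c x * Y x) ->
         as_eq (Rm t (fun x => c x * Y x)) (fun x => c x * Rm t Y x))].

Definition dyn_utility (p : \bar R) (T : nat) (F : nat -> set (set Omega))
    (Um : nat -> (Omega -> R) -> (Omega -> R)) : Prop :=
  forall t, (t < T)%N ->
  [/\ (forall Y, Lp p (F t.+1) Y -> Lp p (F t) (Um t Y)),
      (forall Y lam, Lp p (F t.+1) Y -> Lp p (F t) lam ->
         as_eq (Um t (fun x => Y x + lam x)) (fun x => Um t Y x + lam x)),
      (forall Y Y', Lp p (F t.+1) Y -> Lp p (F t.+1) Y' -> as_le Y Y' ->
         as_le (Um t Y) (Um t Y')) &
      (forall Y c, Lp p (F t.+1) Y -> Lp_plus p (F t) c ->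
         Lp p (F t.+1) (fun x => c x * Y x) ->
         as_eq (Um t (fun x => c x * Y x)) (fun x => c x * Um t Y x))].

Definition Wmap (Rm Um : nat -> (Omega -> R) -> (Omega -> R))
    (eta : nat -> Omega -> R) (t : nat) (Y : Omega -> R) : Omega -> R :=
  let RY := Rm t (fun x => - Y x) in
  fun x => RY x - (1 + eta t x)^-1 * Um t (fun y => Num.max (RY y - Y y) 0) x.

Fixpoint Wchain (Rm Um : nat -> (Omega -> R) -> (Omega -> R))
    (eta : nat -> Omega -> R) (t k : nat) (Y : Omega -> R) : Omega -> R :=
  match k with
  | O => Y
  | k'.+1 => Wmap Rm Um eta t (Wchain Rm Um eta t.+1 k' Y)
  end.

(* V_t(X) = W_t o ... o W_{T-1} (X_{t+1} + ... + X_T); for t = T this is the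
   empty sum 0, i.e. V_T(X) = 0. *)
Definition CoCM (T : nat) (Rm Um : nat -> (Omega -> R) -> (Omega -> R))
    (eta : nat -> Omega -> R) (t : nat) (X : nat -> Omega -> R) : Omega -> R :=
  Wchain Rm Um eta t (T - t) (fun x => \sum_(t.+1 <= u < T.+1) X u x).

End CoC.

From mathcomp Require Import all_boot all_order all_algebra.
From mathcomp Require Import all_classical all_reals all_analysis.
From mathcomp Require Import measurable_realfun.
From mathcomp Require Import ring lra zify.
Import Order.TTheory GRing.Theory Num.Theory.
Local Open Scope classical_set_scope.
Local Open Scope ring_scope.
Set Implicit Arguments. Unset Strict Implicit. Unset Printing Implicit Defensive.

(* The one-step map W_t inherits from R_t and U_t monotonicity, additivity for
   F_t-measurable shifts and positive homogeneity.  For monotonicity: if Y <= Y' then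
   R_t(-Y) <= R_t(-Y'), the shortfall (R_t(-Y') - Y')_+ exceeds (R_t(-Y) - Y)_+ by at
   most R_t(-Y') - R_t(-Y), and by cash additivity of U_t this excess is discounted by
   1/(1+eta_t) <= 1, so W_t(Y) <= W_t(Y').  The three properties pass to the compositions
   W_t o ... o W_(T-1), hence to V_t.  For time consistency, additivity of V_t for the
   F_t-measurable shift X_(s+1) + ... + X_t gives
   V_s(X) = W_s o ... o W_(t-1) (V_t(X) + X_(s+1) + ... + X_t),
   which is monotone in V_t(X). *)

Lemma measurable_inv (R : realType) : measurable_fun [set: R] (@GRing.inv R).
Proof.
have -> : [set: R] = [set~ 0] `|` [set 0] by rewrite setUC setUCr.
apply/measurable_funU => //; first exact: measurableC.
split.
- apply: open_continuous_measurable_fun.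
  + exact/closed_openC/accessible_closed_set1/hausdorff_accessible/Rhausdorff.
  + by move=> x /[!inE] x0; apply: inv_continuous; exact/eqP.
- move=> _ B mB; have [B0|nB0] := pselect (B 0^-1).
  + rewrite (_ : _ `&` _ = [set 0]) //.
    by apply/seteqP; split => [x [] //|x ->].
  + rewrite (_ : _ `&` _ = set0) //.
    by apply/seteqP; split => [x [] /= -> //|//].
Qed.

Lemma powR_add_le (R : realType) (r a b : R) : 0 <= r -> 0 <= a -> 0 <= b ->
  (a + b) `^ r <= 2 `^ r * (a `^ r + b `^ r).
Proof.
move=> r0 a0 b0.
have m0 : 0 <= Num.max a b by rewrite le_max a0.
have ab : a + b <= 2 * Num.max a b.
  by rewrite mulr2n mulrDl mul1r lerD // le_max lexx ?orbT.
apply: (le_trans (ge0_ler_powR r0 _ _ ab)); rewrite ?nnegrE ?addr_ge0 ?mulr_ge0 //.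
rewrite powRM //; apply: ler_wpM2l; first exact: powR_ge0.
by case: (leP a b) => _; rewrite ?lerDr ?lerDl powR_ge0.
Qed.

Lemma maxr0_le_addr (R : realDomainType) (a a' b : R) : 0 <= b -> a' <= a + b ->
  Num.max a' 0 <= Num.max a 0 + b.
Proof.
move=> b0 aa'; rewrite ge_max addr_ge0 ?le_max ?lexx ?orbT // andbT.
by apply: le_trans aa' _; rewrite lerD2r le_max lexx.
Qed.

Section measurable_wrt.
Context {R : realType} {d : measure_display} {Omega : measurableType d}.
Variable G : set (set Omega).
Hypothesis sG : sigma_algebra setT G.

Lemma meas_wrtE (f : Omega -> R) :
  meas_wrt G f <-> measurable_fun [set: g_sigma_algebraType G] f.
Proof.
split=> [mf _ B mB|mf B mB].
  by rewrite setTI /measurable /= (sigma_algebra_id sG); exact: mf.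
by have := mf measurableT B mB; rewrite setTI /measurable /= (sigma_algebra_id sG).
Qed.

Lemma meas_wrt_cst (c : R) : meas_wrt G (fun=> c).
Proof. exact/meas_wrtE/measurable_cst. Qed.

Lemma meas_wrtD (f g : Omega -> R) :
  meas_wrt G f -> meas_wrt G g -> meas_wrt G (fun x => f x + g x).
Proof. by move=> /meas_wrtE mf /meas_wrtE mg; exact/meas_wrtE/measurable_funD. Qed.

Lemma meas_wrtM (f g : Omega -> R) :
  meas_wrt G f -> meas_wrt G g -> meas_wrt G (fun x => f x * g x).
Proof. by move=> /meas_wrtE mf /meas_wrtE mg; exact/meas_wrtE/measurable_funM. Qed.

Lemma meas_wrt_comp (h : R -> R) (f : Omega -> R) :
  measurable_fun setT h -> meas_wrt G f -> meas_wrt G (fun x => h (f x)).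
Proof. by move=> mh /meas_wrtE mf; exact/meas_wrtE/measurableT_comp. Qed.

Lemma meas_wrtN (f : Omega -> R) : meas_wrt G f -> meas_wrt G (fun x => - f x).
Proof. exact: meas_wrt_comp (@oppr_measurable R setT). Qed.

Lemma meas_wrt_max0 (f : Omega -> R) :
  meas_wrt G f -> meas_wrt G (fun x => Num.max (f x) 0).
Proof.
exact: meas_wrt_comp (measurable_maxr (@measurable_id _ _ setT) (measurable_cst (0 : R))).
Qed.

Lemma meas_wrtV (f : Omega -> R) : meas_wrt G f -> meas_wrt G (fun x => (f x)^-1).
Proof. exact: meas_wrt_comp (@measurable_inv R). Qed.

End measurable_wrt.

Definition sub_sigma_algebra d (Omega : measurableType d) (G : set (set Omega)) :=
  sigma_algebra setT G /\ G `<=` measurable.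

Section Lp_closure.
Context {R : realType} {d : measure_display} {Omega : measurableType d}.
Variables (P : probability Omega R) (p : \bar R).
Hypothesis p0 : (0 <= p)%E.
Variable G : set (set Omega).
Hypothesis hG : sub_sigma_algebra G.
Let sG : sigma_algebra setT G := proj1 hG.
Let GM : G `<=` measurable := proj2 hG.

Lemma Lp_widen (G' : set (set Omega)) (f : Omega -> R) :
  G `<=` G' -> Lp P p G f -> Lp P p G' f.
Proof. by move=> GG' [mf h]; split => // B mB; apply: GG'; exact: mf. Qed.

Lemma Lp0 : Lp P p G (fun=> 0).
Proof.
split; first exact: meas_wrt_cst sG 0.
case: p p0 => [r||] //= r0; last by exists 0; apply: aeW => x; rewrite normr0.
have [->|rn0] := eqVneq r 0; [by left|right].
rewrite (_ : (fun x => _) = fun=> 0%E) ?integral0 ?ltry //.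
by apply/funext => x; rewrite normr0 powR0.
Qed.

Lemma Lp_dominated2 (f1 f2 g : Omega -> R) :
  Lp P p G f1 -> Lp P p G f2 -> meas_wrt G g ->
  {ae P, forall x, `|g x| <= `|f1 x| + `|f2 x|} -> Lp P p G g.
Proof.
move=> [m1 h1] [m2 h2] mg hb; split => //.
case: p p0 h1 h2 => [r||] //= r0; last first.
  move=> [M1 b1] [M2 b2]; exists (M1 + M2).
  by apply: filterS3 hb b1 b2 => x /le_trans + e1 e2; apply; exact: lerD.
case=> [->|i1]; [by left|case=> [->|i2]; [by left|right]].
rewrite lee_fin in r0.
have mpow (h : Omega -> R) : meas_wrt G h ->
    measurable_fun [set: Omega] (fun x => (`|h x| `^ r)%:E).
  move=> mh; apply/measurable_EFinP.
  apply: (measurableT_comp (measurable_powR _)).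
  apply: (measurableT_comp (@normr_measurable R setT)).
  by move=> _ B mB; rewrite setTI; apply: GM; exact: mh.
apply: (@le_lt_trans _ _
    (\int[P]_x ((2 `^ r)%:E * ((`|f1 x| `^ r)%:E + (`|f2 x| `^ r)%:E)))%E).
  apply: ae_ge0_le_integral => //.
  - exact: mpow.
  - by move=> x _; rewrite mule_ge0 ?adde_ge0 // lee_fin powR_ge0.
  - exact: emeasurable_funM (measurable_cst _) (emeasurable_funD (mpow _ m1) (mpow _ m2)).
  apply: filterS hb => x hx _; rewrite -EFinD -EFinM lee_fin.
  apply: le_trans (powR_add_le r0 (normr_ge0 _) (normr_ge0 _)).
  by apply: ge0_ler_powR; rewrite ?nnegrE ?addr_ge0.
rewrite ge0_integralZl //; last 2 first.
- by apply: emeasurable_funD; exact: mpow.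
- by move=> x _; rewrite adde_ge0 // lee_fin powR_ge0.
rewrite ge0_integralD //; [|exact: mpow|exact: mpow].
by apply: lte_mul_pinfty; [rewrite lee_fin powR_ge0|by []|exact: lte_add_pinfty].
Qed.

Lemma Lp_dominated (f g : Omega -> R) : Lp P p G f -> meas_wrt G g ->
  {ae P, forall x, `|g x| <= `|f x|} -> Lp P p G g.
Proof.
move=> hf mg hb; apply: Lp_dominated2 hf Lp0 mg _.
by apply: filterS hb => x; rewrite normr0 addr0.
Qed.

Lemma Lp_ae_eq (f g : Omega -> R) :
  Lp P p G f -> meas_wrt G g -> as_eq P f g -> Lp P p G g.
Proof. by move=> hf mg e; apply: Lp_dominated hf mg _; apply: filterS e => x ->. Qed.

Lemma LpD (f g : Omega -> R) :
  Lp P p G f -> Lp P p G g -> Lp P p G (fun x => f x + g x).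
Proof.
move=> hf hg; apply: Lp_dominated2 hf hg (meas_wrtD sG hf.1 hg.1) _.
by apply: aeW => x; exact: ler_normD.
Qed.

Lemma LpN (f : Omega -> R) : Lp P p G f -> Lp P p G (fun x => - f x).
Proof.
move=> hf; apply: Lp_dominated hf (meas_wrtN sG hf.1) _.
by apply: aeW => x; rewrite normrN.
Qed.

Lemma Lp_max0 (f : Omega -> R) : Lp P p G f -> Lp P p G (fun x => Num.max (f x) 0).
Proof.
move=> hf; apply: Lp_dominated hf (meas_wrt_max0 sG hf.1) _.
by apply: aeW => x; case: (leP (f x) 0) => _; rewrite ?normr0.
Qed.

Lemma Lp_mul_bounded (c f : Omega -> R) : meas_wrt G c ->
  {ae P, forall x, `|c x| <= 1} -> Lp P p G f -> Lp P p G (fun x => c x * f x).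
Proof.
move=> mc hc hf; apply: Lp_dominated hf (meas_wrtM sG mc hf.1) _.
by apply: filterS hc => x hx; rewrite normrM ler_piMl.
Qed.

Lemma Lp_sum (f : nat -> Omega -> R) (r : seq nat) :
  (forall u, u \in r -> Lp P p G (f u)) ->
  Lp P p G (fun x => \sum_(u <- r) f u x).
Proof.
elim: r => [|u r IH] hf.
  by under eq_fun do rewrite big_nil; exact: Lp0.
under eq_fun do rewrite big_cons.
apply: LpD; first by apply: hf; exact: mem_head.
by apply: IH => v rv; apply: hf; rewrite inE rv orbT.
Qed.

End Lp_closure.

Section almost_sure.
Context {R : realType} {d : measure_display} {Omega : measurableType d}.
Variable P : probability Omega R.

Lemma as_eq_le (f g : Omega -> R) : as_eq P f g -> as_le P f g.
Proof. by apply: filterS => x ->. Qed.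

Lemma as_eq_sym (f g : Omega -> R) : as_eq P f g -> as_eq P g f.
Proof. by apply: filterS => x ->. Qed.

Lemma as_le_anti (f g : Omega -> R) : as_le P f g -> as_le P g f -> as_eq P f g.
Proof. by apply: filterS2 => x fg gf; apply/le_anti; rewrite fg gf. Qed.

Lemma as_le_sum (f g : nat -> Omega -> R) (r : seq nat) :
  (forall u, u \in r -> as_le P (f u) (g u)) ->
  as_le P (fun x => \sum_(u <- r) f u x) (fun x => \sum_(u <- r) g u x).
Proof.
elim: r => [|u r IH] fg; first by apply: aeW => x; rewrite !big_nil.
have fgr : as_le P (fun x => \sum_(v <- r) f v x) (fun x => \sum_(v <- r) g v x).
  by apply: IH => v rv; apply: fg; rewrite inE rv orbT.
apply: filterS2 (fg u (mem_head _ _)) fgr => x fgu fgrx.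
by rewrite !big_cons lerD.
Qed.

Lemma as_eq_sum (f g : nat -> Omega -> R) (r : seq nat) :
  (forall u, u \in r -> as_eq P (f u) (g u)) ->
  as_eq P (fun x => \sum_(u <- r) f u x) (fun x => \sum_(u <- r) g u x).
Proof.
move=> fg; apply: as_le_anti; apply: as_le_sum => u /fg fgu.
  exact: as_eq_le.
exact/as_eq_le/as_eq_sym.
Qed.

End almost_sure.

Section cost_of_capital.
Context {R : realType} {d : measure_display} {Omega : measurableType d}.
Variables (P : probability Omega R) (T : nat) (F : nat -> set (set Omega)) (p : \bar R).
Variables (Rm Um : nat -> (Omega -> R) -> (Omega -> R)) (eta : nat -> Omega -> R).
Hypotheses (hF : filtration T F) (hp : (0 <= p)%E).
Hypotheses (hR : dyn_risk_measure P p T F Rm) (hU : dyn_utility P p T F Um).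
Hypothesis heta : forall t, (t < T)%N ->
  Lp P 0%E (F t) (eta t) /\ {ae P, forall x, 0 < eta t x}.

Local Notation Lpt t := (Lp P p (F t)).
Local Notation W := (Wmap Rm Um eta).
Local Notation Wc := (Wchain Rm Um eta).
Local Notation V := (CoCM T Rm Um eta).

Lemma filtration_sub t : (t <= T)%N -> sub_sigma_algebra (F t).
Proof. by case: hF => sF incF _ FT tT; split; [exact: sF|rewrite -FT; exact: incF]. Qed.

Lemma Lp_filtration s t (f : Omega -> R) : (s <= t)%N -> (t <= T)%N -> Lpt s f -> Lpt t f.
Proof. by case: hF => _ incF _ _ st tT; apply: Lp_widen; exact: incF. Qed.

Lemma Um_ae_eq t (Z Z' : Omega -> R) : (t < T)%N -> Lpt t.+1 Z -> Lpt t.+1 Z' ->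
  as_eq P Z Z' -> as_eq P (Um t Z) (Um t Z').
Proof.
move=> ht hZ hZ' ZZ'; have [_ _ monoU _] := hU ht.
by apply: as_le_anti; apply: monoU => //; apply: as_eq_le => //; exact: as_eq_sym.
Qed.

Definition discount t x := (1 + eta t x)^-1.

Lemma discount_ge0_le1 t : (t < T)%N ->
  {ae P, forall x, 0 <= discount t x /\ discount t x <= 1}.
Proof.
move=> ht; apply: filterS (heta ht).2 => x eta0.
have eta1 : 0 < 1 + eta t x by rewrite ltr_wpDr // ltW.
by rewrite /discount invr_ge0 invf_le1 // lerDl !ltW.
Qed.

Lemma Lp_discountM t (f : Omega -> R) : (t < T)%N -> Lpt t f ->
  Lpt t (fun x => discount t x * f x).
Proof.
move=> ht hf; have Ft := filtration_sub (ltnW ht); have sFt := proj1 Ft.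
apply: (Lp_mul_bounded hp Ft (c := discount t)) hf.
  apply: (meas_wrtV sFt (f := fun x => 1 + eta t x)).
  exact: (meas_wrtD sFt (meas_wrt_cst sFt 1) (heta ht).1.1).
by apply: filterS (discount_ge0_le1 ht) => x [c0 c1]; rewrite ger0_norm.
Qed.

Definition shortfall t (Y : Omega -> R) x := Num.max (Rm t (fun y => - Y y) x - Y x) 0.

Lemma WmapE t Y x :
  W t Y x = Rm t (fun y => - Y y) x - discount t x * Um t (shortfall t Y) x.
Proof. by []. Qed.

Lemma Lp_risk t Y : (t < T)%N -> Lpt t.+1 Y -> Lpt t (Rm t (fun x => - Y x)).
Proof.
by move=> ht hY; have [LpR _ _ _] := hR ht; exact/LpR/(LpN hp (filtration_sub ht)).
Qed.

Lemma Lp_shortfall t Y : (t < T)%N -> Lpt t.+1 Y -> Lpt t.+1 (shortfall t Y).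
Proof.
move=> ht hY; have Ft1 := filtration_sub ht.
apply: (Lp_max0 hp Ft1); apply: (LpD hp Ft1) (LpN hp Ft1 hY).
exact: Lp_filtration (leqnSn t) ht (Lp_risk ht hY).
Qed.

Lemma Wmap_Lp t Y : (t < T)%N -> Lpt t.+1 Y -> Lpt t (W t Y).
Proof.
move=> ht hY; have Ft := filtration_sub (ltnW ht); have [LpU _ _ _] := hU ht.
apply: (LpD hp Ft (Lp_risk ht hY)); apply: (LpN hp Ft); apply: (Lp_discountM ht).
by apply: LpU; exact: Lp_shortfall ht hY.
Qed.

Lemma Wmap_mono t Y Y' : (t < T)%N -> Lpt t.+1 Y -> Lpt t.+1 Y' -> as_le P Y Y' ->
  as_le P (W t Y) (W t Y').
Proof.
move=> ht hY hY' YY'; have Ft := filtration_sub (ltnW ht); have Ft1 := filtration_sub ht.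
have [_ _ monoR _] := hR ht; have [_ cashU monoU _] := hU ht.
set r := Rm t (fun x => - Y x); set r' := Rm t (fun x => - Y' x).
have rr' : as_le P r r'.
  by apply: monoR; [exact: LpN|exact: LpN|apply: filterS YY' => x; rewrite lerN2].
have hd : Lpt t (fun x => r' x - r x).
  exact: (LpD hp Ft (Lp_risk ht hY') (LpN hp Ft (Lp_risk ht hY))).
have UZ' : as_le P (Um t (shortfall t Y')) (Um t (fun x => shortfall t Y x + (r' x - r x))).
  apply: monoU; [exact: Lp_shortfall| |].
    exact: (LpD hp Ft1 (Lp_shortfall ht hY) (Lp_filtration (leqnSn t) ht hd)).
  apply: filterS2 YY' rr' => x yy rr; apply: maxr0_le_addr; first by rewrite subr_ge0.
  rewrite -/r -/r'; lra.
have eU := cashU _ _ (Lp_shortfall ht hY) hd.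
have rc : {ae P, forall x, r x <= r' x /\ 0 <= discount t x /\ discount t x <= 1}.
  by apply: filterS2 rr' (discount_ge0_le1 ht) => x.
apply: filterS3 UZ' eU rc => x UZx eUx [rx [c0 c1]].
rewrite eUx in UZx; rewrite !WmapE -/r -/r'.
have := ler_wpM2l c0 UZx.
have : discount t x * (r' x - r x) <= r' x - r x by rewrite ler_piMl // subr_ge0.
lra.
Qed.

Lemma Wmap_ae_eq t Y Y' : (t < T)%N -> Lpt t.+1 Y -> Lpt t.+1 Y' -> as_eq P Y Y' ->
  as_eq P (W t Y) (W t Y').
Proof.
move=> ht hY hY' YY'.
by apply: as_le_anti; apply: Wmap_mono => //; apply: as_eq_le => //; exact: as_eq_sym.
Qed.

Lemma Wmap_translate t Y (l : Omega -> R) : (t < T)%N -> Lpt t.+1 Y -> Lpt t l ->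
  as_eq P (W t (fun x => Y x + l x)) (fun x => W t Y x + l x).
Proof.
move=> ht hY hl; have Ft := filtration_sub (ltnW ht); have Ft1 := filtration_sub ht.
have [_ cashR _ _] := hR ht.
have hYl : Lpt t.+1 (fun x => Y x + l x) := LpD hp Ft1 hY (Lp_filtration (leqnSn t) ht hl).
have eR : as_eq P (Rm t (fun x => - (Y x + l x))) (fun x => Rm t (fun x => - Y x) x + l x).
  rewrite (_ : (fun x => - (Y x + l x)) = (fun x => - Y x + - l x)).
    by apply: filterS (cashR _ _ (LpN hp Ft1 hY) (LpN hp Ft hl)) => x ->; rewrite opprK.
  by apply/funext => x; rewrite opprD.
have eZ : as_eq P (shortfall t (fun x => Y x + l x)) (shortfall t Y).
  by apply: filterS eR => x eRx; rewrite /shortfall eRx opprD addrACA subrr addr0.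
have eU := Um_ae_eq ht (Lp_shortfall ht hYl) (Lp_shortfall ht hY) eZ.
by apply: filterS2 eR eU => x eRx eUx; rewrite !WmapE eRx eUx; ring.
Qed.

Lemma Wmap_scale t (a : Omega -> R) Y : (t < T)%N -> Lp_plus P p (F t) a ->
  Lpt t.+1 Y -> Lpt t.+1 (fun x => a x * Y x) ->
  as_eq P (W t (fun x => a x * Y x)) (fun x => a x * W t Y x).
Proof.
move=> ht ha hY haY; have Ft1 := filtration_sub ht.
have [_ _ _ homR] := hR ht; have [_ _ _ homU] := hU ht.
have eR : as_eq P (Rm t (fun x => - (a x * Y x))) (fun x => a x * Rm t (fun x => - Y x) x).
  have haY' : Lpt t.+1 (fun x => a x * - Y x).
    by under eq_fun do rewrite mulrN; exact: (LpN hp Ft1 haY).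
  by under eq_fun do rewrite -mulrN; exact: homR (LpN hp Ft1 hY) ha haY'.
have eZ : as_eq P (shortfall t (fun x => a x * Y x)) (fun x => a x * shortfall t Y x).
  by apply: filterS2 eR ha.2 => x eRx a0; rewrite /shortfall eRx maxr_pMr // mulr0 mulrBr.
have haZ : Lpt t.+1 (fun x => a x * shortfall t Y x).
  have ma1 := (Lp_filtration (leqnSn t) ht ha.1).1.
  have maZ := meas_wrtM (proj1 Ft1) ma1 (Lp_shortfall ht hY).1.
  exact: (Lp_ae_eq hp Ft1 (Lp_shortfall ht haY) maZ eZ).
have eU : as_eq P (Um t (shortfall t (fun x => a x * Y x)))
                  (fun x => a x * Um t (shortfall t Y) x).
  apply: filterS2 (Um_ae_eq ht (Lp_shortfall ht haY) haZ eZ)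
    (homU _ _ (Lp_shortfall ht hY) ha haZ) => x -> //.
by apply: filterS2 eR eU => x eRx eUx; rewrite !WmapE eRx eUx; ring.
Qed.

Lemma Wchain_add k m t Y : Wc t (k + m) Y = Wc t k (Wc (t + k) m Y).
Proof. by elim: k t => [|k IH] t /=; rewrite ?addn0 // IH addSnnS. Qed.

Lemma Wchain_Lp k t Y : (t + k <= T)%N -> Lpt (t + k) Y -> Lpt t (Wc t k Y).
Proof.
elim: k t => [|k IH] t /=; first by rewrite addn0.
by rewrite -addSnnS => tkT hY; apply: Wmap_Lp; [lia|exact: IH].
Qed.

Lemma Wchain_mono k t Y Y' : (t + k <= T)%N -> Lpt (t + k) Y -> Lpt (t + k) Y' ->
  as_le P Y Y' -> as_le P (Wc t k Y) (Wc t k Y').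
Proof.
elim: k t => [|k IH] t //=; rewrite -addSnnS => tkT hY hY' YY'.
by apply: Wmap_mono; [lia|exact: Wchain_Lp|exact: Wchain_Lp|exact: IH].
Qed.

Lemma Wchain_ae_eq k t Y Y' : (t + k <= T)%N -> Lpt (t + k) Y -> Lpt (t + k) Y' ->
  as_eq P Y Y' -> as_eq P (Wc t k Y) (Wc t k Y').
Proof.
move=> tkT hY hY' YY'.
by apply: as_le_anti; apply: Wchain_mono => //; apply: as_eq_le => //; exact: as_eq_sym.
Qed.

Lemma Wchain_translate k t Y (l : Omega -> R) :
  (t + k <= T)%N -> Lpt (t + k) Y -> Lpt t l ->
  as_eq P (Wc t k (fun x => Y x + l x)) (fun x => Wc t k Y x + l x).
Proof.
elim: k t => [|k IH] t /=; first by move=> *; apply: aeW.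
rewrite -addSnnS => tkT hY hl; have ht : (t < T)%N by lia.
have hl1 := Lp_filtration (leqnSn t) ht hl.
have hYl : Lpt t.+1 (Wc t.+1 k (fun x => Y x + l x)).
  apply: Wchain_Lp => //.
  exact: (LpD hp (filtration_sub tkT) hY (Lp_filtration (leq_addr k t.+1) tkT hl1)).
have hY_l : Lpt t.+1 (fun x => Wc t.+1 k Y x + l x).
  exact: (LpD hp (filtration_sub ht) (Wchain_Lp tkT hY) hl1).
apply: filterS2 (Wmap_ae_eq ht hYl hY_l (IH _ tkT hY hl1))
  (Wmap_translate ht (Wchain_Lp tkT hY) hl) => x -> //.
Qed.

Lemma Wchain_scale k t (a : Omega -> R) Y : (t + k <= T)%N -> Lp_plus P p (F t) a ->
  Lpt (t + k) Y -> Lpt (t + k) (fun x => a x * Y x) ->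
  as_eq P (Wc t k (fun x => a x * Y x)) (fun x => a x * Wc t k Y x).
Proof.
elim: k t => [|k IH] t /=; first by move=> *; apply: aeW.
rewrite -addSnnS => tkT ha hY haY; have ht : (t < T)%N by lia.
have ha1 : Lp_plus P p (F t.+1) a := conj (Lp_filtration (leqnSn t) ht ha.1) ha.2.
have eaY := IH _ tkT ha1 hY haY.
have hWaY : Lpt t.+1 (Wc t.+1 k (fun x => a x * Y x)) by exact: Wchain_Lp.
have hWY : Lpt t.+1 (Wc t.+1 k Y) by exact: Wchain_Lp.
have haWY : Lpt t.+1 (fun x => a x * Wc t.+1 k Y x).
  have maWY := meas_wrtM (proj1 (filtration_sub ht)) ha1.1.1 hWY.1.
  exact: (Lp_ae_eq hp (filtration_sub ht) hWaY maWY eaY).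
apply: filterS2 (Wmap_ae_eq ht hWaY haWY eaY) (Wmap_scale ht ha hWY haWY) => x -> //.
Qed.

Definition Lp_adapted (X : nat -> Omega -> R) := forall u, (1 <= u <= T)%N -> Lpt u (X u).

Lemma Lp_partial_sum (Y : nat -> Omega -> R) m n : (n <= T)%N ->
  (forall u, (m < u <= n)%N -> Lpt u (Y u)) ->
  Lpt n (fun x => \sum_(m.+1 <= u < n.+1) Y u x).
Proof.
move=> nT hY; apply: (Lp_sum hp (filtration_sub nT)) => u.
rewrite mem_index_iota ltnS => /andP[mu un].
by apply: (Lp_filtration un nT); apply: hY; rewrite mu.
Qed.

Lemma Lp_adapted_sum X m n : Lp_adapted X -> (n <= T)%N ->
  Lpt n (fun x => \sum_(m.+1 <= u < n.+1) X u x).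
Proof. by move=> hX nT; apply: (Lp_partial_sum nT) => u /andP[mu un]; apply: hX; lia. Qed.

Lemma CoCM_Lp t X : (t <= T)%N -> Lp_adapted X -> Lpt t (V t X).
Proof. by move=> tT hX; apply: Wchain_Lp; rewrite subnKC //; exact: Lp_adapted_sum. Qed.

Lemma CoCM_scale t (a : Omega -> R) X : (t <= T)%N -> Lp_adapted X ->
  Lp_plus P p (F t) a -> (forall u, (t < u <= T)%N -> Lpt u (fun x => a x * X u x)) ->
  as_eq P (V t (fun u x => a x * X u x)) (fun x => a x * V t X x).
Proof.
move=> tT hX ha haX; rewrite /CoCM.
under [X in Wc t (T - t) X]eq_fun do rewrite -mulr_sumr.
apply: Wchain_scale; rewrite ?subnKC //; first exact: Lp_adapted_sum.
by under eq_fun do rewrite mulr_sumr; exact: Lp_partial_sum.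
Qed.

Lemma CoCM_translate t (b : nat -> Omega -> R) X : (t <= T)%N -> Lp_adapted X ->
  (forall u, (1 <= u <= T)%N -> Lpt t (b u)) ->
  as_eq P (V t (fun u x => X u x + b u x))
          (fun x => V t X x + \sum_(t.+1 <= u < T.+1) b u x).
Proof.
move=> tT hX hb; rewrite /CoCM.
under [X in Wc t (T - t) X]eq_fun do rewrite big_split.
apply: Wchain_translate; rewrite ?subnKC //; first exact: Lp_adapted_sum.
apply: (Lp_sum hp (filtration_sub tT)) => u; rewrite mem_index_iota => hu.
by apply: hb; lia.
Qed.

Lemma CoCM_mono t X Xt : (t <= T)%N -> Lp_adapted X -> Lp_adapted Xt ->
  (forall u, (1 <= u <= T)%N -> as_le P (X u) (Xt u)) -> as_le P (V t X) (V t Xt).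
Proof.
move=> tT hX hXt XXt; apply: Wchain_mono; rewrite ?subnKC //; try exact: Lp_adapted_sum.
by apply: as_le_sum => u; rewrite mem_index_iota => hu; apply: XXt; lia.
Qed.

Lemma CoCM_recursion s t X : (s <= t <= T)%N -> Lp_adapted X ->
  as_eq P (V s X) (Wc s (t - s) (fun x => V t X x + \sum_(s.+1 <= u < t.+1) X u x)).
Proof.
case/andP=> st tT hX; rewrite {1}/CoCM.
have -> : (T - s = (t - s) + (T - t))%N by lia.
rewrite Wchain_add subnKC //.
have -> : (fun x => \sum_(s.+1 <= u < T.+1) X u x) =
          (fun x => \sum_(t.+1 <= u < T.+1) X u x + \sum_(s.+1 <= u < t.+1) X u x).
  by apply/funext => x; rewrite addrC -big_cat_nat ?ltnS.
have hl := Lp_adapted_sum s hX tT.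
apply: Wchain_ae_eq; rewrite ?subnKC //.
- apply: Wchain_Lp; rewrite ?subnKC //.
  have hlT := Lp_filtration tT (leqnn T) hl.
  exact: (LpD hp (filtration_sub (leqnn T)) (Lp_adapted_sum t hX (leqnn T)) hlT).
- exact: (LpD hp (filtration_sub tT) (CoCM_Lp tT hX) hl).
- by apply: Wchain_translate; rewrite ?subnKC //; exact: Lp_adapted_sum.
Qed.

Lemma CoCM_time_consistent s t X Xt : (s <= t <= T)%N ->
  Lp_adapted X -> Lp_adapted Xt ->
  (forall u, (1 <= u <= t)%N -> as_eq P (X u) (Xt u)) ->
  as_le P (V t X) (V t Xt) -> as_le P (V s X) (V s Xt).
Proof.
move=> /[dup] /andP[st tT] stT hX hXt XXt VtXXt.
have le_args : as_le P (fun x => V t X x + \sum_(s.+1 <= u < t.+1) X u x)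
                       (fun x => V t Xt x + \sum_(s.+1 <= u < t.+1) Xt u x).
  have sXXt : as_eq P (fun x => \sum_(s.+1 <= u < t.+1) X u x)
                      (fun x => \sum_(s.+1 <= u < t.+1) Xt u x).
    by apply: as_eq_sum => u; rewrite mem_index_iota => hu; apply: XXt; lia.
  by apply: filterS2 VtXXt sXXt => x le_x ->; rewrite lerD2r.
have hlX := Lp_adapted_sum s hX tT; have hlXt := Lp_adapted_sum s hXt tT.
have mono := Wchain_mono (k := t - s) (t := s); rewrite subnKC // in mono.
apply: filterS3 (CoCM_recursion stT hX) (CoCM_recursion stT hXt)
  (mono _ _ tT (LpD hp (filtration_sub tT) (CoCM_Lp tT hX) hlX)
     (LpD hp (filtration_sub tT) (CoCM_Lp tT hXt) hlXt) le_args) => x -> -> //.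
Qed.

End cost_of_capital.

Unset Implicit Arguments.
Theorem proposition2 (R : realType) (d : measure_display) (Omega : measurableType d)
  (P : probability Omega R) (T : nat) (F : nat -> set (set Omega))
  (p : \bar R) (Rm Um : nat -> (Omega -> R) -> (Omega -> R)) (eta : nat -> Omega -> R)
  (X Xt : nat -> Omega -> R) :
  (1 <= T)%N ->
  filtration T F ->
  (0 <= p)%E ->
  dyn_risk_measure P p T F Rm ->
  dyn_utility P p T F Um ->
  (forall t, (t < T)%N -> Lp P 0%E (F t) (eta t) /\
                          {ae P, forall x, 0 < eta t x}) ->
  (forall s, (1 <= s <= T)%N -> Lp P p (F s) (X s) /\ Lp P p (F s) (Xt s)) ->
  (* (i) *)
  (forall t (a : Omega -> R), (t < T)%N ->
     Lp_plus P p (F t) a ->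
     (forall u, (t < u <= T)%N -> Lp P p (F u) (fun x => a x * X u x)) ->
     as_eq P (CoCM T Rm Um eta t (fun u x => a x * X u x))
             (fun x => a x * CoCM T Rm Um eta t X x)) /\
  (forall t (b : nat -> Omega -> R), (t < T)%N ->
     (forall u, (1 <= u <= T)%N -> Lp P p (F t) (b u)) ->
     as_eq P (CoCM T Rm Um eta t (fun u x => X u x + b u x))
             (fun x => CoCM T Rm Um eta t X x + \sum_(t.+1 <= u < T.+1) b u x)) /\
  (forall t, (t < T)%N ->
     (forall u, (1 <= u <= T)%N -> as_le P (X u) (Xt u)) ->
     as_le P (CoCM T Rm Um eta t X) (CoCM T Rm Um eta t Xt)) /\
  (* (ii) time consistency *)
  (forall s t, (s <= t)%N -> (t <= T)%N ->
     (forall u, (1 <= u <= t)%N -> as_eq P (X u) (Xt u)) ->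
     as_le P (CoCM T Rm Um eta t X) (CoCM T Rm Um eta t Xt) ->
     as_le P (CoCM T Rm Um eta s X) (CoCM T Rm Um eta s Xt)).
Proof.
move=> _ hF hp hR hU heta hXXt.
have hX : Lp_adapted P T F p X by move=> u /hXXt[].
have hXt : Lp_adapted P T F p Xt by move=> u /hXXt[].
split; [|split; [|split]].
- by move=> t a /ltnW tT; exact: (CoCM_scale hF hp hR hU heta tT hX).
- by move=> t b /ltnW tT; exact: (CoCM_translate hF hp hR hU heta tT hX).
- by move=> t /ltnW tT; exact: (CoCM_mono hF hp hR hU heta tT hX hXt).
- move=> s t st tT; apply: (CoCM_time_consistent hF hp hR hU heta _ hX hXt).
  by rewrite st tT.
Qed.
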